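(* Let $n\ge 6$ with $3\mid n$. Then the metric dimension of $H(n)$ is $n-\frac{n}{3}$.
   Context: For $n\ge 5$, $H(n)$ is the graph with vertex set $V_1\cup V_2$, where $V_1=\{v_1,\dots,v_n\}$ and $V_2=\{v_iv_j: 1\le i<j\le n\}$ (each $v_iv_j$ a single vertex), and where $v_r\in V_1$ is adjacent to $v_iv_j\in V_2$ iff $r=i$ or $r=j$; there are no other edges. $d(u,v)$ is the shortest-path distance. A set $Q$ of vertices is a resolving set of a graph $G$ if any two distinct vertices $x,y$ satisfy $(d(x,q))_{q\in Q}\neq(d(y,q))_{q\in Q}$; the metric dimension is the minimum size of a resolving set. *)

From mathcomp Require Import all_boot.
Set Implicit Arguments. Unset Strict Implicit. Unset Printing Implicit Defensive.

Section Graphs.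
Variable T : finType.
Variable e : rel T.

Fixpoint reach (k : nat) (u v : T) : bool :=
  match k with
  | 0 => u == v
  | k'.+1 => reach k' u v || [exists w, reach k' u w && e w v]
  end.

(* shortest-path distance: least k with reach k u v
   (equals #|T| if v is unreachable; irrelevant for connected graphs) *)
Definition dist (u v : T) : nat := find (fun k => reach k u v) (iota 0 #|T|).

Definition resolving (Q : {set T}) : Prop :=
  forall x y : T, x != y -> exists2 q, q \in Q & dist x q != dist y q.

Definition resolvingb (Q : {set T}) : bool :=
  [forall x, forall y, (x != y) ==> [exists q in Q, dist x q != dist y q]].

Definition metric_dim : nat :=
  \big[minn/#|T|]_(Q : {set T} | resolvingb Q) #|Q|.
End Graphs.

Definition Hvert (n : nat) : finType :=
  ('I_n + {p : 'I_n * 'I_n | p.1 < p.2})%type.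

Definition Hadj (n : nat) : rel (Hvert n) :=
  fun x y =>
    match x, y with
    | inl r, inr p => (r == (val p).1) || (r == (val p).2)
    | inr p, inl r => (r == (val p).1) || (r == (val p).2)
    | _, _ => false
    end.

Lemma resolvingP (T : finType) (e : rel T) (Q : {set T}) :
  reflect (resolving e Q) (resolvingb e Q).
Proof.
apply: (iffP forallP) => H.
- move=> x y nxy; have /forallP/(_ y)/implyP/(_ nxy)/exists_inP[q qQ hq] := H x.
  by exists q.
- move=> x; apply/forallP => y; apply/implyP => nxy.
  by have [q qQ hq] := H x y nxy; apply/exists_inP; exists q.
Qed.

From mathcomp Require Import all_boot zify.
Set Implicit Arguments. Unset Strict Implicit. Unset Printing Implicit Defensive.

(* In H(n) distinct vertices v_r, v_s are at distance 2, v_r is at distance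
   1 or 3 from an edge vertex p according as r is an endpoint of p, and two
   edge vertices are within distance 2 iff they share an endpoint.
   Lower bound: a resolving set Q must separate two vertices v_r, v_s outside Q
   by an edge of Q containing exactly one of r, s.  Let deg r count the edges
   of Q containing r.  At most one v_r outside Q has deg r = 0, and no edge of
   Q has both endpoints outside Q with degree 1.  So the weight
   3[v_r in Q] + deg r + [v_r notin Q, deg r = 1] + 2[v_r notin Q, deg r = 0]
   is at least 2 for every r, while the total is at most 3|Q| + 2.
   Upper bound for n = 3m: cut {0, ..., n-1} into blocks {3t, 3t+1, 3t+2} and
   take the 2m landmark edges {3t, 3t+1} and {3t+1, 3t+2}.  The landmarks
   containing r determine r, and the landmarks meeting a non-landmark edge
   determine it. *)

Section Distance.
Variables (T : finType) (e : rel T).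

Lemma reach_mono k1 k2 u v : k1 <= k2 -> reach e k1 u v -> reach e k2 u v.
Proof.
elim: k2 => [|k IH]; first by rewrite leqn0 => /eqP->.
by rewrite leq_eqVlt => /orP[/eqP-> //|lt_k1k] r; rewrite /= IH.
Qed.

Lemma reachS k u v :
  reach e k.+1 u v = reach e k u v || [exists w, reach e k u w && e w v].
Proof. by []. Qed.

Lemma reach1 u v : reach e 1 u v = (u == v) || e u v.
Proof.
rewrite reachS; congr (_ || _); apply/existsP/idP => [[w /andP[/eqP<- //]]|euv].
by exists u; rewrite /= eqxx.
Qed.

Lemma dist_leE k u v : k < #|T| -> (dist e u v <= k) = reach e k u v.
Proof.
move=> lt_kT; rewrite /dist; have [r|nr] := boolP (reach e k u v).
  by rewrite leqNgt; apply/negP => /(before_find 0); rewrite nth_iota // add0n r.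
apply/negP => le_fk.
have lt_fT : find (fun j => reach e j u v) (iota 0 #|T|) < size (iota 0 #|T|).
  by rewrite size_iota (leq_ltn_trans le_fk).
have := nth_find 0 (etrans (has_find _ _) lt_fT).
rewrite nth_iota ?add0n => [/(reach_mono le_fk)|]; last by rewrite size_iota in lt_fT.
by rewrite (negbTE nr).
Qed.

Lemma dist_eqS k u v :
  k.+1 < #|T| -> reach e k.+1 u v -> ~~ reach e k u v -> dist e u v = k.+1.
Proof.
move=> lt_kT r nr; apply/eqP; rewrite eqn_leq dist_leE // r ltnNge.
by rewrite dist_leE ?(ltnW lt_kT).
Qed.

Lemma dist_eq0 u v : (dist e u v == 0) = (u == v).
Proof.
have T_gt0 : 0 < #|T| by apply/card_gt0P; exists u.
by rewrite -leqn0 dist_leE.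
Qed.

Lemma dist_refl u : dist e u u = 0.
Proof. by apply/eqP; rewrite dist_eq0. Qed.

Lemma bigmin_leq (I : eqType) (s : seq I) (P : pred I) (F : I -> nat) c i :
  i \in s -> P i -> \big[minn/c]_(j <- s | P j) F j <= F i.
Proof.
elim: s => // j s IH; rewrite inE big_cons => /orP[/eqP<- ->|si Pi].
  exact: geq_minl.
by case: (P j); [apply: leq_trans (geq_minr _ _) (IH si Pi) | apply: IH].
Qed.

Lemma metric_dim_le Q : resolving e Q -> metric_dim e <= #|Q|.
Proof. by move/resolvingP; apply: bigmin_leq; rewrite mem_index_enum. Qed.

Lemma metric_dim_ge c :
  c <= #|T| -> (forall Q, resolving e Q -> c <= #|Q|) -> c <= metric_dim e.
Proof.
move=> le_cT le_cQ; apply: (big_ind (leq c)) => // [x y|Q /resolvingP].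
  by rewrite leq_min => -> ->.
exact: le_cQ.
Qed.

End Distance.

Section HGraph.
Variable n : nat.
Local Notation V := (Hvert n).
Local Notation E := {p : 'I_n * 'I_n | p.1 < p.2}.
Local Notation e := (@Hadj n).

Definition incident (r : 'I_n) (p : E) : bool := (r == (val p).1) || (r == (val p).2).

Definition share (p q : E) : bool := [exists r, incident r p && incident r q].

Lemma Hadj_lr r (p : E) : e (inl r) (inr p) = incident r p. Proof. by []. Qed.

Lemma Hadj_rl r (p : E) : e (inr p) (inl r) = incident r p. Proof. by []. Qed.

Lemma incident1 (p : E) : incident (val p).1 p.
Proof. by rewrite /incident eqxx. Qed.

Lemma incident2 (p : E) : incident (val p).2 p.
Proof. by rewrite /incident eqxx orbT. Qed.

Lemma edge_neq (p : E) : (val p).1 != (val p).2.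
Proof. by rewrite neq_ltn (valP p). Qed.

Lemma exists_edge (r s : 'I_n) : r != s -> exists p : E, incident r p && incident s p.
Proof.
case: (ltngtP r s) => [lt_rs|lt_sr|/val_inj->]; last by rewrite eqxx.
- by exists (exist _ (r, s) lt_rs); rewrite /incident /= !eqxx orbT.
- by exists (exist _ (s, r) lt_sr); rewrite /incident /= !eqxx orbT.
Qed.

Lemma reach2_ll r s : reach e 2 (inl r) (inl s).
Proof.
have [<-|/exists_edge[p /andP[rp sp]]] := eqVneq r s.
  by apply: (reach_mono (k1 := 0)) => /=.
rewrite reachS; apply/orP; right; apply/existsP; exists (inr p).
by rewrite reach1; apply/andP.
Qed.

Lemma reach2_lr r (p : E) : reach e 2 (inl r) (inr p) = incident r p.
Proof.
rewrite reachS reach1 Hadj_lr; apply/idP/idP => [/orP[//|/existsP[[s|q]]]|rp].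
- by rewrite reach1 => /andP[/orP[/eqP[<-]|//]].
- by rewrite andbF.
- by rewrite rp orbT.
Qed.

Lemma reach2_rr (p q : E) : reach e 2 (inr p) (inr q) = (p == q) || share p q.
Proof.
rewrite reachS reach1 orbF; congr (_ || _).
apply/existsP/existsP => [[[r|p']]|[r /andP[rp rq]]]; rewrite ?andbF //.
- by rewrite reach1 Hadj_rl Hadj_lr => /andP[]; exists r; apply/andP.
- by exists (inl r); rewrite reach1 Hadj_rl Hadj_lr rp.
Qed.

Lemma reach3_lr r (p : E) : reach e 3 (inl r) (inr p).
Proof.
rewrite reachS; apply/orP; right; apply/existsP; exists (inl (val p).1).
by rewrite reach2_ll Hadj_lr incident1.
Qed.

Hypothesis n_ge4 : 4 <= n.

Lemma card_Hvert_gt3 : 3 < #|V|.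
Proof. by rewrite card_sum card_ord (leq_trans n_ge4) ?leq_addr. Qed.

Lemma dist_ll r s : r != s -> dist e (inl r) (inl s) = 2.
Proof.
move=> nrs; apply: dist_eqS; rewrite ?reach2_ll //; first exact: ltnW card_Hvert_gt3.
by rewrite reach1 /= orbF.
Qed.

Lemma dist_lr r (p : E) : dist e (inl r) (inr p) = if incident r p then 1 else 3.
Proof.
have T_gt3 := card_Hvert_gt3.
case: ifP => rp; apply: dist_eqS; rewrite ?reach2_lr ?rp ?reach3_lr //.
- exact: ltn_trans T_gt3.
- by rewrite reach1.
Qed.

Lemma dist_rr_le2 (p q : E) : (dist e (inr p) (inr q) <= 2) = (p == q) || share p q.
Proof. by rewrite dist_leE ?reach2_rr // (ltnW card_Hvert_gt3). Qed.

Lemma dist_rr_neq1 (p q : E) : dist e (inr p) (inr q) != 1.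
Proof.
have [->|npq] := eqVneq p q; first by rewrite dist_refl.
rewrite neq_ltn orbC ltnNge dist_leE ?reach1 /= ?orbF ?npq //.
exact: ltn_trans card_Hvert_gt3.
Qed.

End HGraph.

Lemma sum_mem_card (T : finType) (S : {pred T}) : \sum_x (x \in S : nat) = #|S|.
Proof. by rewrite -sum1_card [RHS]big_mkcond; apply: eq_bigr => x _; case: (x \in S). Qed.

Lemma card_set_sum (T1 T2 : finType) (Q : {set T1 + T2}) :
  #|Q| = #|[set x | inl x \in Q]| + #|[set y | inr y \in Q]|.
Proof.
rewrite -!sum_mem_card big_sumType.
by congr (_ + _); apply: eq_bigr => x _; rewrite inE.
Qed.

Section Degree.
Variable n : nat.
Local Notation E := {p : 'I_n * 'I_n | p.1 < p.2}.
Variable B : {set E}.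

Definition degree (r : 'I_n) : nat := #|[set p in B | incident r p]|.

Lemma degree0_incident r p : degree r = 0 -> p \in B -> incident r p = false.
Proof.
move/cards0_eq/setP/(_ p) => rB pB; apply/negP => rp.
by move: rB; rewrite !inE pB rp.
Qed.

Lemma degree1_incident r p : degree r = 1 -> p \in B -> incident r p ->
  {in B, forall p', incident r p' = (p' == p)}.
Proof.
move=> /eqP/cards1P[p0 rB] pB rp p' p'B.
have := rB; move/setP/(_ p); rewrite !inE pB rp => /esym/eqP->.
by move/setP/(_ p'): rB; rewrite !inE p'B.
Qed.

Lemma sum_incident (f : 'I_n -> nat) (p : E) :
  \sum_(r | incident r p) f r = f (val p).1 + f (val p).2.
Proof.
rewrite (bigD1 (val p).1) ?incident1 // (bigD1 (val p).2) /=; last first.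
  by rewrite incident2 eq_sym edge_neq.
rewrite big1 ?addn0 // => r /andP[/andP[/orP[] /eqP-> ne1 ne2]].
- by rewrite eqxx in ne1.
- by rewrite eqxx in ne2.
Qed.

Lemma sum_weighted_degree (w : 'I_n -> nat) :
  \sum_r w r * degree r = \sum_(p in B) (w (val p).1 + w (val p).2).
Proof.
have wdeg r : w r * degree r = \sum_(p in B) (incident r p : nat) * w r.
  rewrite /degree -sum1_card big_distrr /= big_mkcond [RHS]big_mkcond /=.
  apply: eq_bigr => p _; rewrite inE.
  by case: (p \in B); case: (incident r p); rewrite /= ?muln1 ?mul1n.
rewrite (eq_bigr _ (fun r _ => wdeg r)) exchange_big.
apply: eq_bigr => p _; rewrite -sum_incident [RHS]big_mkcond.
by apply: eq_bigr => r _; case: (incident r p); rewrite ?mul1n.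
Qed.

Lemma sum_degree : \sum_r degree r = 2 * #|B|.
Proof.
rewrite -sum1_card big_distrr /=.
under eq_bigr => r _ do rewrite -[degree r]mul1n.
by rewrite sum_weighted_degree; apply: eq_bigr.
Qed.

End Degree.

Section LowerBound.
Variable n : nat.
Hypothesis n_ge4 : 4 <= n.
Local Notation V := (Hvert n).
Local Notation E := {p : 'I_n * 'I_n | p.1 < p.2}.
Local Notation e := (@Hadj n).
Variable Q : {set V}.
Hypothesis resQ : resolving e Q.

Let B := [set p | inr p \in Q].
Let leaves := [set r | (inl r \notin Q) && (degree B r == 1)].
Let isolated := [set r | (inl r \notin Q) && (degree B r == 0)].

Lemma resolving_incidence_inj r s :
  inl r \notin Q -> inl s \notin Q -> {in B, incident r =1 incident s} -> r = s.
Proof.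
move=> rQ sQ rs; have [//|/(@resQ (inl r) (inl s))[[a|p] qQ]] := eqVneq r s.
- have ra : r != a by apply: contraNneq rQ => ->.
  have sa : s != a by apply: contraNneq sQ => ->.
  by rewrite !dist_ll // eqxx.
- by rewrite !dist_lr // rs ?eqxx // inE.
Qed.

Lemma card_isolated_le1 : #|isolated| <= 1.
Proof.
rewrite leqNgt; apply/card_gt1P => -[r [s [+ + /eqP[]]]].
rewrite !inE => /andP[rQ /eqP r0] /andP[sQ /eqP s0].
by apply: resolving_incidence_inj => // p pB; rewrite !(degree0_incident (B := B)).
Qed.

Lemma leaves_on_edge p : p \in B -> ((val p).1 \in leaves) + ((val p).2 \in leaves) <= 1.
Proof.
move=> pB; case L1: ((val p).1 \in leaves); case L2: ((val p).2 \in leaves) => //.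
move: L1 L2; rewrite !inE => /andP[Q1 /eqP d1] /andP[Q2 /eqP d2].
case/eqP: (edge_neq p); apply: resolving_incidence_inj => // p' p'B.
rewrite (degree1_incident d1 pB (incident1 p) p'B).
by rewrite (degree1_incident d2 pB (incident2 p) p'B).
Qed.

Lemma card_leaves_le : #|leaves| <= #|B|.
Proof.
have := sum_weighted_degree B (fun r => (r \in leaves : nat)).
have -> : \sum_r (r \in leaves : nat) * degree B r = #|leaves|.
  rewrite -sum_mem_card; apply: eq_bigr => r _.
  by case: (boolP (r \in leaves)) => [|_]; rewrite ?mul0n // inE => /andP[_ /eqP->].
by move=> ->; rewrite -sum1_card; apply: leq_sum leaves_on_edge.
Qed.

Lemma resolving_card_lower : 2 * n <= 3 * #|Q| + 2.
Proof.
pose A := [set r | inl r \in Q].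
pose weight r := (r \in A) * 3 + degree B r + (r \in leaves) + (r \in isolated) * 2.
have weight_ge2 r : 2 <= weight r.
  by rewrite /weight !inE; case: (inl r \in Q); case: (degree B r) => [|[|d]].
have sum_weight : \sum_r weight r = #|A| * 3 + 2 * #|B| + #|leaves| + #|isolated| * 2.
  by rewrite !big_split -!big_distrl !sum_mem_card sum_degree.
have : \sum_(r < n) 2 <= \sum_r weight r by apply: leq_sum => r _.
rewrite sum_weight sum_nat_const card_ord (card_set_sum Q) -/A -/B.
by have := card_isolated_le1; have := card_leaves_le; lia.
Qed.

End LowerBound.

Definition in_landmark (t : nat) (b : bool) (x : nat) : bool :=
  (x == 3 * t + b) || (x == (3 * t + b).+1).

Definition landmark_pair (x y : nat) : bool := (y == x.+1) && (x %% 3 != 2).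

Lemma in_landmark_block t x :
  (in_landmark t false x || in_landmark t true x) = (x %/ 3 == t).
Proof. rewrite /in_landmark; lia. Qed.

Lemma in_landmark_self x : in_landmark (x %/ 3) (x %% 3 == 2) x.
Proof. rewrite /in_landmark; lia. Qed.

Lemma in_landmark_out t b x : x %/ 3 != t -> in_landmark t b x = false.
Proof. rewrite /in_landmark; lia. Qed.

Lemma in_landmark_inj t x y : x %/ 3 = t -> y %/ 3 = t ->
  in_landmark t false x = in_landmark t false y ->
  in_landmark t true x = in_landmark t true y -> x = y.
Proof. rewrite /in_landmark; lia. Qed.

Lemma in_landmark_sep x y :
  x != y -> exists b, in_landmark (x %/ 3) b x != in_landmark (x %/ 3) b y.
Proof.
move=> nxy; apply/existsP; rewrite -negb_forall; apply: contra nxy => /forallP sig_xy.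
by move: (sig_xy false) (sig_xy true); rewrite /in_landmark; lia.
Qed.

Lemma landmark_pair_sep m x1 x2 y1 y2 :
  x1 < x2 < 3 * m -> y1 < y2 < 3 * m ->
  ~~ landmark_pair x1 x2 -> ~~ landmark_pair y1 y2 ->
  (forall t b, t < m ->
     in_landmark t b x1 || in_landmark t b x2 = in_landmark t b y1 || in_landmark t b y2) ->
  x1 = y1 /\ x2 = y2.
Proof.
move=> /andP[lt_x12 lt_x2m] /andP[lt_y12 lt_y2m] nx ny sig_xy.
have blocks t : t < m ->
    ((x1 %/ 3 == t) || (x2 %/ 3 == t)) = ((y1 %/ 3 == t) || (y2 %/ 3 == t)).
  by move=> lt_tm; rewrite -!in_landmark_block orbACA sig_xy // sig_xy // orbACA.
have [eq1 eq2] : x1 %/ 3 = y1 %/ 3 /\ x2 %/ 3 = y2 %/ 3.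
  have := blocks (x1 %/ 3); have := blocks (x2 %/ 3).
  have := blocks (y1 %/ 3); have := blocks (y2 %/ 3).
  lia.
(* Inside one block the only non-landmark pair is {3t, 3t+2}. *)
have [lt_t|ge_t] := ltnP (x1 %/ 3) (x2 %/ 3); last first.
  by move: nx ny; rewrite /landmark_pair; lia.
have sig1 b : in_landmark (x1 %/ 3) b x1 = in_landmark (x1 %/ 3) b y1.
  have lt_tm : x1 %/ 3 < m by lia.
  move: (sig_xy _ b lt_tm).
  by rewrite (in_landmark_out b (x := x2)) ?(in_landmark_out b (x := y2)) ?orbF //; lia.
have sig2 b : in_landmark (x2 %/ 3) b x2 = in_landmark (x2 %/ 3) b y2.
  have lt_tm : x2 %/ 3 < m by lia.
  move: (sig_xy _ b lt_tm).
  by rewrite (in_landmark_out b (x := x1)) ?(in_landmark_out b (x := y1)) //; lia.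
by split; [apply: (in_landmark_inj (t := x1 %/ 3)) | apply: (in_landmark_inj (t := x2 %/ 3))].
Qed.

Section UpperBound.
Variable m : nat.
Local Notation N := (3 * m).
Local Notation V := (Hvert N).
Local Notation E := {p : 'I_N * 'I_N | p.1 < p.2}.
Local Notation e := (@Hadj N).

Lemma landmark_lt (t : 'I_m) (b : bool) : (3 * t + b).+1 < N.
Proof. by have := ltn_ord t; case: b; lia. Qed.

Definition landmark (t : 'I_m) (b : bool) : E :=
  exist _ (Ordinal (ltnW (landmark_lt t b)), Ordinal (landmark_lt t b)) (ltnSn _).

Definition landmarks : {set V} := [set inr (landmark tb.1 tb.2) | tb : 'I_m * bool].

Lemma incident_landmark r t b : incident r (landmark t b) = in_landmark t b r.
Proof. by []. Qed.

Lemma share_landmark (p : E) t b :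
  share p (landmark t b) = in_landmark t b (val p).1 || in_landmark t b (val p).2.
Proof.
apply/existsP/orP => [[r /andP[/orP[]/eqP-> rt]]|[pt|pt]]; rewrite -?incident_landmark.
- by left.
- by right.
- by exists (val p).1; rewrite incident1.
- by exists (val p).2; rewrite incident2.
Qed.

Lemma landmark_mem t b : inr (landmark t b) \in landmarks.
Proof. by apply/imsetP; exists (t, b). Qed.

Lemma card_landmarks : #|landmarks| = 2 * m.
Proof.
rewrite card_imset ?card_prod ?card_ord ?card_bool 1?mulnC // => -[t b] [t' b'].
move/(congr1 (fun x : V => if x is inr p then val (val p).1 else 0)) => /= eq_tb.
have eq_t : t = t' by apply: val_inj; move: eq_tb; case: b; case: b' => /=; lia.
by move: eq_tb; rewrite eq_t => /addnI; case: b b' => [] [].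
Qed.

Lemma landmark_pair_mem (p : E) :
  landmark_pair (val p).1 (val p).2 -> inr p \in landmarks.
Proof.
case: p => -[a c] lt_ac /andP[/eqP /= c_eq /= a_mod].
have lt_tm : a %/ 3 < m by have := ltn_ord a; lia.
apply/imsetP; exists (Ordinal lt_tm, a %% 3 == 1) => //; congr inr.
by apply: val_inj; congr pair; apply: val_inj => /=; lia.
Qed.

Lemma block_lt (r : 'I_N) : r %/ 3 < m.
Proof. by have := ltn_ord r; lia. Qed.

Hypothesis m_ge2 : 2 <= m.

Let N_ge4 : 4 <= N. Proof. lia. Qed.

Lemma landmarks_sep_V1 r s : r != s ->
  exists2 q, q \in landmarks & dist e (inl r) q != dist e (inl s) q.
Proof.
move=> nrs; have [b sep_b] := in_landmark_sep nrs.
exists (inr (landmark (Ordinal (block_lt r)) b)); first exact: landmark_mem.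
rewrite !dist_lr // !incident_landmark.
by move: sep_b; do 2![case: in_landmark].
Qed.

Lemma landmarks_sep_V1V2 r (p : E) :
  exists2 q, q \in landmarks & dist e (inl r) q != dist e (inr p) q.
Proof.
exists (inr (landmark (Ordinal (block_lt r)) (r %% 3 == 2))); first exact: landmark_mem.
by rewrite dist_lr // incident_landmark in_landmark_self eq_sym dist_rr_neq1.
Qed.

Lemma landmarks_sep_V2 (p p' : E) : p != p' ->
  exists2 q, q \in landmarks & dist e (inr p) q != dist e (inr p') q.
Proof.
move=> npp'; have [pL|pL] := boolP (inr p \in landmarks).
  by exists (inr p); rewrite // dist_refl eq_sym dist_eq0 eq_sym.
have [p'L|p'L] := boolP (inr p' \in landmarks).
  by exists (inr p'); rewrite // dist_refl dist_eq0.
pose sep t b := share p (landmark t b) != share p' (landmark t b).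
have [/existsP[t /existsP[b sep_tb]]|/existsPn same] := boolP [exists t, exists b, sep t b].
  exists (inr (landmark t b)); first exact: landmark_mem.
  have ne q : inr q \notin landmarks -> (q == landmark t b) = false.
    by move=> qL; apply: contraNF qL => /eqP->; apply: landmark_mem.
  apply: contraNneq sep_tb => /(congr1 (leq^~ 2)) /=.
  by rewrite !dist_rr_le2 // (ne p pL) (ne p' p'L) /= => ->.
have [] := @landmark_pair_sep m (val p).1 (val p).2 (val p').1 (val p').2.
- by rewrite (valP p) ltn_ord.
- by rewrite (valP p') ltn_ord.
- exact: contra (@landmark_pair_mem p) pL.
- exact: contra (@landmark_pair_mem p') p'L.
- move=> t b lt_tm; have /existsPn/(_ b) := same (Ordinal lt_tm).
  by rewrite negbK !share_landmark => /eqP.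
move=> eq1 eq2; case/eqP: npp'; apply: val_inj.
by rewrite [val p]surjective_pairing [val p']surjective_pairing; congr pair; apply: val_inj.
Qed.

Lemma resolving_landmarks : resolving e landmarks.
Proof.
move=> [r|p] [s|p'] nxy.
- exact: landmarks_sep_V1.
- exact: landmarks_sep_V1V2.
- by have [q qL d_neq] := landmarks_sep_V1V2 s p; exists q; rewrite // eq_sym.
- exact: landmarks_sep_V2.
Qed.

End UpperBound.

Theorem theorem3p7 (n : nat) (hn : 6 <= n) (h3 : 3 %| n) :
  metric_dim (@Hadj n) = n - n %/ 3.
Proof.
case/dvdnP: h3 hn => m ->; rewrite mulnC => m_ge6.
have m_ge2 : 2 <= m by lia.
have n_ge4 : 4 <= 3 * m by lia.
have -> : 3 * m - 3 * m %/ 3 = 2 * m by lia.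
apply/eqP; rewrite eqn_leq; apply/andP; split.
  by rewrite -(card_landmarks m); apply/metric_dim_le/resolving_landmarks.
apply: metric_dim_ge => [|Q /(resolving_card_lower n_ge4)]; last by lia.
by rewrite card_sum card_ord; lia.
Qed.
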